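(* Let $j\ge1$ and $s\ge j$ be integers, write $s=qj+r$ with integers $q\ge1$ and $0\le r<j$, and let $\alpha=\sum_{i=0}^{q-1}(r+ij+1)$. Then for every positive integer $n$, \[ g_{j,s,1}(n)=g_{j,r,1}(n+\alpha)-qj, \] where $g_{j,s,1}$ and $g_{j,r,1}$ are the sequences defined in the context.
   Context: Fix integers $j\ge1$, $\lambda\ge1$, $s\ge0$. Define a labeled infinite rooted tree $\mathcal K$ as follows. It has ''supernodes'' $S_0,S_1,S_2,\dots$ with an edge between $S_i$ and $S_{i+1}$ for every $i\ge0$ ($S_0$ is the root). $S_0$ has two further children: the ''initial leaf'' and a node $N_0$, which is a leaf. For each $i\ge1$, $S_i$ has a child $N_i$ (the ''knot node''), and attached to $N_i$ are $\lambda$ chains, each a path of $i\cdot j$ nodes hanging from $N_i$; the last (bottom) node of each chain is a leaf. Each supernode carries $s$ labels and every other node carries exactly one label. The labels are the consecutive positive integers $1,2,3,\dots$, assigned in the following order: initial leaf, $S_0$, $N_0$; then for $i=1,2,3,\dots$: $S_i$ (its $s$ labels), $N_i$, then the nodes of the first chain of $N_i$ from top to bottom, then the second chain, ..., then the $\lambda$-th chain. The initial leaf has weight $1$; every other leaf of $\mathcal K$ (namely $N_0$ and the bottom node of each chain) has weight $j$. The leaf weight sequence $w(n)=w_{j,s,\lambda}(n)$ ($n\ge1$) is the total weight of the leaves of $\mathcal K$ whose label is $\le n$. Explicitly, $w(n)=1+j\cdot\#\{\ell\in L:\ell\le n\}$, where $L$ consists of the number $s+2$ together with the numbers $L_{i,c}=s+2+\sum_{l=1}^{i-1}(s+1+\lambda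 l j)+s+1+c\,i\,j$ for $i\ge1$, $1\le c\le\lambda$. The sequence $g_{j,s,\lambda}$ is defined by $g_{j,s,\lambda}(n)=w_{j,s,\lambda}(n)$ for $1\le n\le 3+2s+\lambda j$ and $g_{j,s,\lambda}(n)=g_{j,s,\lambda}(n-s-g_{j,s,\lambda}(n-j))+\lambda j$ for $n>3+2s+\lambda j$ (this is well defined). The same definitions are applied with $s$ replaced by $r$ to obtain $g_{j,r,1}$. *)

From mathcomp Require Import all_boot.
Set Implicit Arguments. Unset Strict Implicit. Unset Printing Implicit Defensive.

Definition Lic (j s lam i c : nat) : nat :=
  s + 2 + \sum_(1 <= l < i) (s + 1 + lam * l * j) + (s + 1) + c * i * j.

(* The elements of L are pairwise
   distinct (s+2 < L_{1,1} and L_{i,c} strictly increases in (i,c)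
   lexicographically), and L_{i,c} >= i, so only i <= n matter. *)
Definition countL (j s lam n : nat) : nat :=
  (s + 2 <= n) + \sum_(1 <= i < n.+1) \sum_(1 <= c < lam.+1) (Lic j s lam i c <= n).

Definition w (j s lam n : nat) : nat := 1 + j * countL j s lam n.

(* one step of the recursion: given l = [g(1); ...; g(m)], compute g(m+1).
   (0 :: l) is indexed so that nth 0 (0 :: l) k = g(k) for 1 <= k <= m. *)
Definition gnext (j s lam : nat) (l : seq nat) : nat :=
  let n := (size l).+1 in
  let G k := nth 0 (0 :: l) k in
  if n <= 3 + 2 * s + lam * j then w j s lam n
  else G (n - s - G (n - j)) + lam * j.

Fixpoint gseq (j s lam N : nat) : seq nat :=
  match N with
  | 0 => [::]
  | N'.+1 => let l := gseq j s lam N' in rcons l (gnext j s lam l)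
  end.

Definition g (j s lam n : nat) : nat := nth 0 (0 :: gseq j s lam n) n.

From mathcomp Require Import all_boot zify.

(* For lambda = 1 the weight-j leaves of the tree K_{j,s,1} sit at the labels
   leaf j s 0 = s + 2 < leaf j s 1 < leaf j s 2 < ..., where consecutive
   positions differ by s + 1 + i * j.  Hence w_{j,s,1}(n) = 1 + j * c(n),
   c(n) being the number of leaf positions <= n.

   1. For any strictly increasing f : nat -> nat, the number of i with
      f i <= n is characterised by: k < count  <->  f k <= n.
   2. With this characterisation the leaf weight sequence w_{j,s,1} satisfies
      the nested recursion of g_{j,s,1}; by strong induction g_{j,s,1} = w_{j,s,1}.
   3. Writing s = q j + r, the leaf positions for r are those for s shifted by
      alpha = sum_{i<q} (r + i j + 1), preceded by q extra leaves at labels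
      <= alpha + 1.  So c_r(n + alpha) = c_s(n) + q for n >= 1, which is the
      theorem once g is replaced by w on both sides. *)

Section Counting.
Variable f : nat -> nat.
Hypothesis f_incr : forall i, f i < f i.+1.

Lemma incr_leq_mono : {mono f : a b / a <= b}.
Proof. exact/leq_mono/(homo_ltn ltn_trans). Qed.

Lemma incr_ge_id i : i <= f i.
Proof. by elim: i => // i IH; apply: leq_ltn_trans IH (f_incr i). Qed.

Lemma count_below_exists n : exists c, forall k, (k < c) = (f k < n).
Proof.
elim: n => [|n [c Hc]]; first by exists 0.
exists (c + (f c == n)) => k.
have fcn : n <= f c by rewrite leqNgt -Hc ltnn.
case: (ltngtP k c) => [kc|ck|->].
- by rewrite ltn_addr // ltnS ltnW // -Hc.
- have : f c < f k by rewrite ltnNge incr_leq_mono -ltnNge.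
  case: eqP; lia.
- case: eqP; lia.
Qed.

Lemma sum_nat_lt m c : \sum_(0 <= i < m) (i < c) = minn m c.
Proof.
elim: m => [|m IH]; first by rewrite big_geq // min0n.
rewrite big_nat_recr //= IH; case: (ltnP m c); lia.
Qed.

(* Number of indices i with f i <= n (only i <= n can qualify). *)
Definition nb_below n := \sum_(0 <= i < n.+1) (f i <= n).

Lemma nb_belowP n k : (k < nb_below n) = (f k <= n).
Proof.
have [c Hc] := count_below_exists n.+1.
have c_le : c <= n.+1.
  by rewrite leqNgt Hc -leqNgt incr_ge_id.
suff -> : nb_below n = c by rewrite Hc.
rewrite /nb_below -(minn_idPr c_le) -sum_nat_lt.
by apply: eq_big_nat => i _; rewrite Hc.
Qed.

Lemma nb_below_between n k : f k <= n < f k.+1 -> nb_below n = k.+1.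
Proof.
case/andP=> lo hi; apply/eqP; rewrite eqn_leq.
by rewrite leqNgt nb_belowP -ltnNge hi nb_belowP lo.
Qed.

Lemma nb_below_unique n c : (forall k, (k < c) = (f k <= n)) -> nb_below n = c.
Proof.
move=> Hc; apply/eqP; rewrite eqn_leq.
by rewrite leqNgt nb_belowP -Hc ltnn leqNgt Hc -nb_belowP ltnn.
Qed.
End Counting.

(* leaf j s i is the label of the i-th weight-j leaf of K_{j,s,1}: the node
   N_0 for i = 0 and the bottom of the single chain of N_i, L_{i,1}, for i >= 1. *)
Fixpoint leaf (j s i : nat) : nat :=
  if i is i'.+1 then leaf j s i' + (s + 1 + i * j) else s + 2.

Lemma leaf_incr j s i : leaf j s i < leaf j s i.+1.
Proof. rewrite /=; lia. Qed.

Lemma leaf_mono j s : {mono leaf j s : a b / a <= b}.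
Proof. exact/incr_leq_mono/leaf_incr. Qed.

Lemma leaf_sum j s i : leaf j s i = s + 2 + \sum_(1 <= l < i.+1) (s + 1 + l * j).
Proof.
elim: i => [|i IH]; first by rewrite big_geq // addn0.
rewrite /= IH (big_nat_recr i.+1) //=; lia.
Qed.

Lemma Lic_leaf j s i : 1 <= i -> Lic j s 1 i 1 = leaf j s i.
Proof.
case: i => // i _; rewrite /Lic leaf_sum (big_nat_recr i.+1) //= mul1n.
under eq_bigr => l _ do rewrite mul1n.
by rewrite !addnA.
Qed.

Lemma countL_leaf j s n : countL j s 1 n = nb_below (leaf j s) n.
Proof.
rewrite /countL /nb_below [RHS]big_ltn //; congr (_ + _).
by apply: eq_big_nat => i /andP [i_ge1 _]; rewrite big_nat1 Lic_leaf.
Qed.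

Lemma countLP j s n k : (k < countL j s 1 n) = (leaf j s k <= n).
Proof. by rewrite countL_leaf nb_belowP //; apply: leaf_incr. Qed.

Lemma countL_between j s n k :
  leaf j s k <= n < leaf j s k.+1 -> countL j s 1 n = k.+1.
Proof. by rewrite countL_leaf; apply/nb_below_between/leaf_incr. Qed.

Lemma countL_ge2 j s n : 3 + 2 * s + j < n -> 1 < countL j s 1 n.
Proof. by move=> n_big; rewrite countLP /=; lia. Qed.

(* Core of the recursion: the index n - s - w(n - j) lies one leaf interval
   below n.  If leaf k.+1 <= n < leaf k.+2, then n - j lies in the interval of
   leaf k or of leaf k.+1, and in both cases the index lands between leaf k
   and leaf k.+1. *)
Lemma countL_rec j s n : 1 <= j -> 3 + 2 * s + j < n ->
  countL j s 1 (n - s - w j s 1 (n - j)) = (countL j s 1 n).-1.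
Proof.
move=> j_ge1 n_big.
move: (countL_ge2 _ _ _ n_big); case Ec: (countL j s 1 n) => [|[|k]] // _.
have lo : leaf j s k.+1 <= n by rewrite -countLP Ec.
have hi : n < leaf j s k.+2 by rewrite ltnNge -countLP Ec ltnn.
move: lo hi; rewrite /w /= => lo hi.
have mul2 : k.+2 * j = k.+1 * j + j by rewrite mulSn addnC.
have [before|after] := leqP (leaf j s k + (s + 1 + k.+1 * j)) (n - j).
- rewrite (@countL_between j s (n - j) k.+1) /=; last by apply/andP; split; lia.
  by rewrite mulnC; apply: countL_between => /=; apply/andP; split; lia.
- rewrite (@countL_between j s (n - j) k) /=; last by apply/andP; split; lia.
  by rewrite mulnC; apply: countL_between => /=; apply/andP; split; lia.
Qed.

Lemma w_rec j s n : 1 <= j -> 3 + 2 * s + j < n ->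
  w j s 1 n = w j s 1 (n - s - w j s 1 (n - j)) + j.
Proof.
move=> j_ge1 n_big; rewrite [w _ _ _ (n - s - _)]/w countL_rec // /w.
by case: (countL j s 1 n) (countL_ge2 _ _ _ n_big) => // c _; rewrite mulnS; lia.
Qed.

Lemma w_rec_index j s n : 1 <= j -> 3 + 2 * s + j < n ->
  s + 2 <= n - s - w j s 1 (n - j).
Proof.
move=> j_ge1 n_big; rewrite -[s + 2]/(leaf j s 0) -countLP countL_rec //.
by case: (countL j s 1 n) (countL_ge2 _ _ _ n_big) => [|[]].
Qed.

Lemma size_gseq j s lam N : size (gseq j s lam N) = N.
Proof. by elim: N => //= N IH; rewrite size_rcons IH. Qed.

Lemma nth_gseq j s lam N k : k <= N -> nth 0 (0 :: gseq j s lam N) k = g j s lam k.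
Proof.
elim: N => [|N IH]; first by rewrite leqn0 => /eqP ->.
rewrite leq_eqVlt => /orP [/eqP -> //|k_le].
by rewrite /= -rcons_cons nth_rcons /= size_gseq k_le IH.
Qed.

Lemma g_S j s lam m : g j s lam m.+1 = gnext j s lam (gseq j s lam m).
Proof. by rewrite /g /= nth_rcons size_gseq ltnn eqxx. Qed.

Lemma g_eq_w j s n : 1 <= j -> 1 <= n -> g j s 1 n = w j s 1 n.
Proof.
move=> j_ge1; elim/ltn_ind: n => -[//|m] IH _.
rewrite g_S /gnext size_gseq mul1n; case: ifP => // /negbT; rewrite -ltnNge => m_big.
have idx_ge := w_rec_index _ _ _ j_ge1 m_big.
have w_pos : 0 < w j s 1 (m.+1 - j) by [].
rewrite (@nth_gseq _ _ _ m (m.+1 - j)) ?IH; try lia.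
rewrite nth_gseq ?IH; try lia.
by rewrite -w_rec.
Qed.

Section Shift.
Variables j r q : nat.
Let alpha := \sum_(0 <= i < q) (r + i * j + 1).

Lemma leaf_at_q : leaf j r q = q * j + r + 2 + alpha.
Proof.
rewrite /alpha; elim: q => [|p IH]; first by rewrite big_geq //=; lia.
rewrite /= IH big_nat_recr //= mulSn; lia.
Qed.

Lemma leaf_shift i : leaf j r (i + q) = leaf j (q * j + r) i + alpha.
Proof.
elim: i => [|i IH]; first by rewrite add0n leaf_at_q.
rewrite addSn /= IH -addSn mulnDl; lia.
Qed.

Lemma leaf_before_q k : k < q -> leaf j r k <= alpha + 1.
Proof.
have := leaf_at_q; case: q => // p /= leaf_q k_le.
have : leaf j r k <= leaf j r p by rewrite leaf_mono.
lia.
Qed.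

Lemma countL_shift n : 1 <= n ->
  countL j r 1 (n + alpha) = countL j (q * j + r) 1 n + q.
Proof.
move=> n_ge1; rewrite countL_leaf; apply: nb_below_unique => [|k].
  exact: leaf_incr.
case: (ltnP k q) => [k_lt|/subnK <-].
- by rewrite ltn_addl //; apply/esym; have := leaf_before_q k k_lt; lia.
- by rewrite leaf_shift ltn_add2r leq_add2r countLP.
Qed.
End Shift.

Theorem theorem4p3 (j s q r : nat) :
  1 <= j -> j <= s -> 1 <= q -> r < j -> s = q * j + r ->
  forall n : nat, 1 <= n ->
    g j s 1 n + q * j = g j r 1 (n + \sum_(0 <= i < q) (r + i * j + 1)).
Proof.
move=> j_ge1 _ _ _ -> n n_ge1.
rewrite !g_eq_w ?addn_gt0 ?n_ge1 // /w countL_shift //.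
by rewrite mulnDr (mulnC j q) addnA.
Qed.
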